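(* Suppose the expanded system is time-invariant. Let $\tilde\beta\in(0,1)$ and $K\in\mathbb{R}^{m\times n}$. If there exist symmetric positive definite $P^{(k)}\in\mathbb{R}^{\tilde n\times\tilde n}$ for $k\in\{1,\dots,N\}$ and $G\in\mathbb{R}^{\tilde n\times\tilde n}$ such that $$\begin{bmatrix}\tilde\beta^2P^{(k)} & \mathcal{C}(F^{(k)}(K))^\top G\\ G^\top\mathcal{C}(F^{(k)}(K)) & G^\top+G-P^{(k)}\end{bmatrix}\succeq0\quad\text{for all }k\in\{1,\dots,N\},$$ then the expanded system $\tilde x_{t+1}=\mathcal{C}(F(\tilde\theta_t,K))\tilde x_t$ with this gain $K$ is exponentially robustly stable with rate $\tilde\beta$.
   Context: Let $n,m,N$ be positive integers, $\tilde n=n(n+1)/2$. $\mathrm{vec}$ stacks columns; $\mathrm{vech}(X)$ stacks columnwise the entries on and below the diagonal of square $X$. $E_e\in\mathbb{R}^{\tilde n\times n^2}$ satisfies $E_e\mathrm{vec}(X)=\mathrm{vech}(X)$ for all $X\in\mathbb{R}^{n\times n}$, $D\in\mathbb{R}^{n^2\times\tilde n}$ satisfies $D\mathrm{vech}(Y)=\mathrm{vec}(Y)$ for all symmetric $Y$, and $\mathcal{C}(Y):=E_eYD$. Given symmetric $M^{(1)},\dots,M^{(N)}\in\mathbb{R}^{n(n+m)\times n(n+m)}$ (vertices of the second moment of $\mathrm{vec}([A_t,B_t])$ of an SMP system $x_{t+1}=A_t(\theta_t)x_t+B_t(\theta_t)u_t$ with $\mathrm{E}[v_tv_t^\top|\theta]=\sum_k[\phi(\theta_t)]_kM^{(k)}$,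 $\phi:\mathbb{S}_\theta\to\mathbb{P}_N=\{\varphi\in\mathbb{R}^N:\varphi_k\ge0,\sum\varphi_k=1\}$), partition $M^{(k)}$ into blocks $M^{(k)}_{i,j}\in\mathbb{R}^{n\times n}$, $i,j\le n+m$. Column $n(j-1)+i$ of $F^{(k)}_{aa}\in\mathbb{R}^{n^2\times n^2}$ is $\mathrm{vec}(M^{(k)}_{i,j})$; column $m(j-1)+i'$ of $F^{(k)}_{ab}\in\mathbb{R}^{n^2\times nm}$ is $\mathrm{vec}(M^{(k)}_{n+i',j})$; column $n(j'-1)+i$ of $F^{(k)}_{ba}\in\mathbb{R}^{n^2\times nm}$ is $\mathrm{vec}(M^{(k)}_{i,n+j'})$; column $m(j'-1)+i'$ of $F^{(k)}_{bb}\in\mathbb{R}^{n^2\times m^2}$ is $\mathrm{vec}(M^{(k)}_{n+i',n+j'})$ ($i,j\le n$, $i',j'\le m$). $F^{(k)}(K):=F^{(k)}_{aa}-F^{(k)}_{ab}(I_n\otimes K)-F^{(k)}_{ba}(K\otimes I_n)+F^{(k)}_{bb}(K\otimes K)$, $F(\tilde\theta,K):=\sum_{k=1}^N[\tilde\theta]_kF^{(k)}(K)$. The expanded system is $\tilde x_{t+1}=\mathcal{C}(F(\tilde\theta_t,K))\tilde x_t$, $\tilde x_t\in\mathbb{R}^{\tilde n}$, $\tilde\theta_t\in\tilde{\mathbb{S}}:=\phi(\mathbb{S}_\theta)\subseteq\mathbb{P}_N$. Time-invariant means $\tilde\theta_t=\tilde\theta$ is constant in $t$ (so parameter sequences are constant).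 Exponentially robustly stable with rate $\tilde\beta$: there is $\tilde\alpha\in(0,\infty)$ with $\|\tilde x_t\|\le\tilde\alpha\|\tilde x_0\|\tilde\beta^t$ for all $\tilde x_0\in\mathbb{R}^{\tilde n}$, all admissible parameter sequences in $\tilde{\mathbb{S}}$, and all $t\ge0$. *)

From HB Require Import structures.
From mathcomp Require Import all_boot all_order all_algebra.
From mathcomp Require Import reals.
Set Implicit Arguments. Unset Strict Implicit. Unset Printing Implicit Defensive.
Import Order.TTheory GRing.Theory Num.Theory.
Local Open Scope ring_scope.

Section Defs.
Variable R : realType.

(* entry (i,j) of a matrix using 0-based natural-number indices; 0 if out of range *)
Definition mxent (p q : nat) (A : 'M[R]_(p, q)) (i j : nat) : R :=
  match @insub _ (fun k => k < p)%N 'I_p i, @insub _ (fun k => k < q)%N 'I_q j with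
  | Some i', Some j' => A i' j'
  | _, _ => 0
  end.

Definition ntil (n : nat) : nat := (n * n.+1)./2.

(* vec: stacks the columns; 0-based entry j*n + i is X_{i,j} *)
Definition vec (n : nat) (X : 'M[R]_n) : 'cV[R]_(n * n) :=
  \col_(k < n * n) mxent X (k %% n) (k %/ n).

(* 0-based (row, column) pairs of the entries on and below the diagonal,
   listed columnwise *)
Definition vech_pairs (n : nat) : seq (nat * nat) :=
  flatten [seq [seq (i, j) | i <- iota j (n - j)] | j <- iota 0 n].

Definition vech (n : nat) (X : 'M[R]_n) : 'cV[R]_(ntil n) :=
  \col_(k < ntil n)
     mxent X (nth (0, 0)%N (vech_pairs n) k).1 (nth (0, 0)%N (vech_pairs n) k).2.

Definition kron (m1 n1 m2 n2 : nat) (A : 'M[R]_(m1, n1)) (B : 'M[R]_(m2, n2))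
  : 'M[R]_(m1 * m2, n1 * n2) :=
  \matrix_(r, c) (mxent A (r %/ m2) (c %/ n2) * mxent B (r %% m2) (c %% n2)).

Definition blk (n m : nat) (M : 'M[R]_(n * (n + m))) (i j : nat) : 'M[R]_n :=
  \matrix_(r < n, c < n) mxent M (i * n + r) (j * n + c).

(* column n(j-1)+i (1-based) is vec(M_{i,j}), i,j <= n *)
Definition Faa (n m : nat) (M : 'M[R]_(n * (n + m))) : 'M[R]_(n * n, n * n) :=
  \matrix_(p, q) vec (blk M (q %% n) (q %/ n)) p ord0.
(* column m(j-1)+i' is vec(M_{n+i',j}), i' <= m, j <= n *)
Definition Fab (n m : nat) (M : 'M[R]_(n * (n + m))) : 'M[R]_(n * n, n * m) :=
  \matrix_(p, q) vec (blk M (n + q %% m) (q %/ m)) p ord0.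
(* column n(j'-1)+i is vec(M_{i,n+j'}), i <= n, j' <= m *)
Definition Fba (n m : nat) (M : 'M[R]_(n * (n + m))) : 'M[R]_(n * n, m * n) :=
  \matrix_(p, q) vec (blk M (q %% n) (n + q %/ n)) p ord0.
(* column m(j'-1)+i' is vec(M_{n+i',n+j'}), i',j' <= m *)
Definition Fbb (n m : nat) (M : 'M[R]_(n * (n + m))) : 'M[R]_(n * n, m * m) :=
  \matrix_(p, q) vec (blk M (n + q %% m) (n + q %/ m)) p ord0.

Definition Fk (n m : nat) (M : 'M[R]_(n * (n + m))) (K : 'M[R]_(m, n))
  : 'M[R]_(n * n) :=
  Faa M - Fab M *m kron (1%:M : 'M[R]_n) K - Fba M *m kron K (1%:M : 'M[R]_n)
  + Fbb M *m kron K K.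

Definition Fth (n m N : nat) (M : 'I_N -> 'M[R]_(n * (n + m))) (th : 'cV[R]_N)
  (K : 'M[R]_(m, n)) : 'M[R]_(n * n) :=
  \sum_(k < N) th k ord0 *: Fk (M k) K.

Definition Cop (n : nat) (Ee : 'M[R]_(ntil n, n * n)) (D : 'M[R]_(n * n, ntil n))
  (Y : 'M[R]_(n * n)) : 'M[R]_(ntil n) := Ee *m Y *m D.

Definition simplex (N : nat) (v : 'cV[R]_N) : Prop :=
  (forall k, 0 <= v k ord0) /\ \sum_(k < N) v k ord0 = 1.

Definition psd (p : nat) (A : 'M[R]_p) : Prop :=
  A^T = A /\ forall x : 'cV[R]_p, 0 <= (x^T *m A *m x) ord0 ord0.
Definition pd (p : nat) (A : 'M[R]_p) : Prop :=
  A^T = A /\ forall x : 'cV[R]_p, x != 0 -> 0 < (x^T *m A *m x) ord0 ord0.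

Definition vnorm (p : nat) (x : 'cV[R]_p) : R :=
  Num.sqrt (\sum_(i < p) x i ord0 ^+ 2).

Definition traj (p : nat) (A : 'M[R]_p) (x0 : 'cV[R]_p) (t : nat) : 'cV[R]_p :=
  iter t (fun x => A *m x) x0.

End Defs.

From HB Require Import structures.
From mathcomp Require Import all_boot all_order all_algebra.
From mathcomp Require Import reals.
From mathcomp Require Import ring lra.
Import Order.TTheory GRing.Theory Num.Theory.
Local Open Scope ring_scope.
Set Implicit Arguments. Unset Strict Implicit. Unset Printing Implicit Defensive.

(* Averaging the vertex LMIs with the weights [thtil] gives the same LMI for
   P(thtil) = sum_k thtil_k P^(k) and A(thtil) = C(F(thtil, K)), since both depend
   affinely on [thtil].  Evaluated at z = (x, - A(thtil) x) this LMI loses the slack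
   variable G and reads V(A(thtil) x) <= beta^2 V(x) for V(x) = x^T P(thtil) x.
   As V lies between c |x|^2 and C |x|^2 uniformly in [thtil] (there are finitely
   many positive definite vertices), |x_t| <= sqrt(C / c) beta^t |x_0|. *)

Section QuadraticForms.
Variable R : realFieldType.

Definition sqnorm (p : nat) (x : 'I_p -> R) : R := \sum_(i < p) x i ^+ 2.

Definition qform (p : nat) (Q : 'I_p -> 'I_p -> R) (x : 'I_p -> R) : R :=
  \sum_(j < p) (\sum_(i < p) x i * Q i j) * x j.

Lemma sqnorm_ge0 p (x : 'I_p -> R) : 0 <= sqnorm x.
Proof. by apply: sumr_ge0 => i _; rewrite sqr_ge0. Qed.

Lemma sqnorm_lift0 p (x : 'I_p.+1 -> R) :
  sqnorm x = x ord0 ^+ 2 + sqnorm (fun i => x (lift ord0 i)).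
Proof. by rewrite /sqnorm big_ord_recl. Qed.

Lemma sqr_le_sqnorm p (x : 'I_p -> R) i : x i ^+ 2 <= sqnorm x.
Proof.
by rewrite /sqnorm (bigD1 i) //= lerDl; apply: sumr_ge0 => j _; rewrite sqr_ge0.
Qed.

Lemma normM_le_sqnorm p (x : 'I_p -> R) i j : `|x i * x j| <= sqnorm x.
Proof.
have := sqr_le_sqnorm x i; have := sqr_le_sqnorm x j.
rewrite normrM -[x i ^+ 2]real_normK ?num_real // -[x j ^+ 2]real_normK ?num_real //.
have := sqr_ge0 (`|x i| - `|x j|); nra.
Qed.

Lemma qform_le p (Q : 'I_p -> 'I_p -> R) x :
  qform Q x <= (\sum_(j < p) \sum_(i < p) `|Q i j|) * sqnorm x.
Proof.
rewrite /qform mulr_suml; apply: ler_sum => j _.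
rewrite !mulr_suml; apply: ler_sum => i _.
apply: le_trans (ler_norm _) _.
rewrite mulrAC normrM mulrC; exact: ler_wpM2l (normM_le_sqnorm _ _ _).
Qed.

Lemma eq_qform p (Q : 'I_p -> 'I_p -> R) x y : x =1 y -> qform Q x = qform Q y.
Proof.
by move=> eq_xy; apply: eq_bigr => j _; rewrite eq_xy; under eq_bigr do rewrite eq_xy.
Qed.

Lemma qformB p (Q1 Q2 : 'I_p -> 'I_p -> R) x :
  qform (fun i j => Q1 i j - Q2 i j) x = qform Q1 x - qform Q2 x.
Proof.
rewrite /qform -sumrB; apply: eq_bigr => j _; rewrite -mulrBl -sumrB.
by congr (_ * _); apply: eq_bigr => i _; rewrite mulrBr.
Qed.

Lemma qform_rank1 p (b : 'I_p -> R) k x :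
  qform (fun i j => b i * b j * k) x = (\sum_(i < p) b i * x i) ^+ 2 * k.
Proof.
set S := \sum_(i < p) b i * x i.
rewrite /qform (eq_bigr (fun j => b j * x j * (S * k))) => [|j _].
  by rewrite -mulr_suml -/S; ring.
by rewrite /S !mulr_suml mulr_sumr; apply: eq_bigr => i _; ring.
Qed.

Lemma qform_delta p (Q : 'I_p -> 'I_p -> R) i0 :
  qform Q (fun i => (i == i0)%:R) = Q i0 i0.
Proof.
rewrite /qform.
under eq_bigr => j _ do rewrite mulr_natr mulrb; rewrite -big_mkcond big_pred1_eq.
by under eq_bigr => i _ do rewrite mulr_natl mulrb; rewrite -big_mkcond big_pred1_eq.
Qed.

Lemma qform_lift0 p (Q : 'I_p.+1 -> 'I_p.+1 -> R) x :
  (forall i j, Q i j = Q j i) ->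
  qform Q x = Q ord0 ord0 * x ord0 ^+ 2
         + 2 * x ord0 * (\sum_(i < p) Q ord0 (lift ord0 i) * x (lift ord0 i))
         + qform (fun i j => Q (lift ord0 i) (lift ord0 j)) (fun i => x (lift ord0 i)).
Proof.
move=> Qsym; rewrite /qform (big_ord_recl p) /= (big_ord_recl p) /=.
under [X in _ + X = _]eq_bigr => j _ do rewrite big_ord_recl mulrDl.
rewrite big_split /= mulrDl mulr_sumr !addrA; congr (_ + _).
rewrite -addrA mulr_suml -big_split /=; congr (_ + _); first ring.
by apply: eq_bigr => i _; rewrite Qsym; ring.
Qed.

Definition schur_compl p (Q : 'I_p.+1 -> 'I_p.+1 -> R) (i j : 'I_p) : R :=
  Q (lift ord0 i) (lift ord0 j)
  - Q ord0 (lift ord0 i) * Q ord0 (lift ord0 j) * (Q ord0 ord0)^-1.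

Lemma qform_schur p (Q : 'I_p.+1 -> 'I_p.+1 -> R) x :
  (forall i j, Q i j = Q j i) -> Q ord0 ord0 != 0 ->
  let s := \sum_(i < p) Q ord0 (lift ord0 i) * x (lift ord0 i) in
  qform Q x = Q ord0 ord0 * (x ord0 + s / Q ord0 ord0) ^+ 2
              + qform (schur_compl Q) (fun i => x (lift ord0 i)).
Proof.
move=> Qsym a_neq0 s; rewrite qform_lift0 // qformB qform_rank1 -/s.
by field.
Qed.

Lemma schur_compl_sym p (Q : 'I_p.+1 -> 'I_p.+1 -> R) :
  (forall i j, Q i j = Q j i) -> forall i j, schur_compl Q i j = schur_compl Q j i.
Proof. by move=> Qsym i j; rewrite /schur_compl [Q (lift ord0 i) _]Qsym; ring. Qed.

Lemma schur_compl_pos p (Q : 'I_p.+1 -> 'I_p.+1 -> R) :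
  (forall i j, Q i j = Q j i) -> Q ord0 ord0 != 0 ->
  (forall x, (exists i, x i != 0) -> 0 < qform Q x) ->
  forall y, (exists i, y i != 0) -> 0 < qform (schur_compl Q) y.
Proof.
move=> Qsym a_neq0 Qpos y [i y_i_neq0].
pose s := \sum_(k < p) Q ord0 (lift ord0 k) * y k.
pose x k := if unlift ord0 k is Some k' then y k' else - s / Q ord0 ord0.
have x_lift k : x (lift ord0 k) = y k by rewrite /x liftK.
have x_ord0 : x ord0 = - s / Q ord0 ord0 by rewrite /x unlift_none.
have := Qpos x; rewrite qform_schur // (eq_qform _ x_lift).
under eq_bigr do rewrite x_lift.
rewrite x_ord0 -/s mulNr addNr expr0n mulr0 add0r.
by apply; exists (lift ord0 i); rewrite x_lift.
Qed.

Lemma sqr_dot_le p (b x : 'I_p -> R) :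
  (\sum_(i < p) b i * x i) ^+ 2 <= (\sum_(j < p) \sum_(i < p) `|b i * b j|) * sqnorm x.
Proof.
rewrite -[_ ^+ 2]mulr1 -qform_rank1; apply: le_trans (qform_le _ _) _.
by under eq_bigr do under eq_bigr do rewrite mulr1.
Qed.

(* Completing the square in the first coordinate reduces coercivity to that of
   the Schur complement, one dimension lower. *)
Lemma qform_coercive p (Q : 'I_p -> 'I_p -> R) :
  (forall i j, Q i j = Q j i) ->
  (forall x, (exists i, x i != 0) -> 0 < qform Q x) ->
  exists2 c, 0 < c & forall x, c * sqnorm x <= qform Q x.
Proof.
elim: p Q => [|p IH] Q Qsym Qpos.
  by exists 1 => // x; rewrite /sqnorm /qform !big_ord0 mulr0.
set a := Q ord0 ord0.
have a_gt0 : 0 < a.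
  by rewrite /a -qform_delta; apply: Qpos; exists ord0; rewrite eqxx oner_neq0.
have a_neq0 : a != 0 by rewrite gt_eqF.
have [c c_gt0 Hc] := IH _ (schur_compl_sym Qsym) (schur_compl_pos Qsym a_neq0 Qpos).
set b := fun i => Q ord0 (lift ord0 i).
pose B := \sum_(j < p) \sum_(i < p) `|b i * b j|.
have B_ge0 : 0 <= B by apply: sumr_ge0 => j _; apply: sumr_ge0.
pose L := 2 * B / a ^+ 2 + 1.
have L_gt0 : 0 < L.
  by apply: ltr_wpDl => //; apply: divr_ge0; [apply: mulr_ge0 | apply: sqr_ge0].
pose mu := Num.min (a / 2) (c / L).
have mu_gt0 : 0 < mu by rewrite lt_min !divr_gt0.
have mu_le_a : mu <= a / 2 by rewrite ge_min lexx.
have muL_le_c : mu * L <= c by rewrite -ler_pdivlMr // ge_min lexx orbT.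
exists mu => // x; rewrite sqnorm_lift0 qform_schur // -/a.
set s := \sum_(i < p) _; set u := x ord0 + s / a; set y := fun i => _.
have x0_le : x ord0 ^+ 2 <= 2 * u ^+ 2 + (L - 1) * sqnorm y.
  have : (s / a) ^+ 2 <= B / a ^+ 2 * sqnorm y.
    rewrite expr_div_n [X in _ <= X]mulrAC.
    by apply: ler_wpM2r; rewrite ?invr_ge0 ?sqr_ge0 ?sqr_dot_le.
  have := sqr_ge0 (x ord0 + 2 * (s / a)); rewrite /L /u addrK; nra.
have := Hc y; have := sqnorm_ge0 y; have := sqr_ge0 u; nra.
Qed.

End QuadraticForms.

Lemma sum_block_mx (V : nmodType) (I : Type) (r : seq I) p1 p2 q1 q2
    (Aul : I -> 'M[V]_(p1, q1)) (Aur : I -> 'M[V]_(p1, q2))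
    (Adl : I -> 'M[V]_(p2, q1)) (Adr : I -> 'M[V]_(p2, q2)) :
  \sum_(k <- r) block_mx (Aul k) (Aur k) (Adl k) (Adr k)
  = block_mx (\sum_(k <- r) Aul k) (\sum_(k <- r) Aur k)
             (\sum_(k <- r) Adl k) (\sum_(k <- r) Adr k).
Proof.
elim: r => [|k r IH]; first by rewrite !big_nil block_mx0.
by rewrite !big_cons IH add_block_mx.
Qed.

Section SlackLMI.
Variable R : realFieldType.

Definition quad p (A : 'M[R]_p) (x : 'cV[R]_p) : R := (x^T *m A *m x) ord0 ord0.

Lemma quadE p (A : 'M[R]_p) x :
  quad A x = qform (fun i j => A i j) (fun i => x i ord0).
Proof.
rewrite /quad /qform !mxE; apply: eq_bigr => j _; rewrite !mxE; congr (_ * _).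
by apply: eq_bigr => i _; rewrite !mxE.
Qed.

Definition slack_lmi p (b : R) (G P A : 'M[R]_p) : 'M[R]_(p + p) :=
  block_mx (b *: P) (A^T *m G) (G^T *m A) (G^T + G - P).

Lemma quad_slack_lmi p b (G P A : 'M[R]_p) x :
  quad (slack_lmi b G P A) (col_mx x (- (A *m x))) = b * quad P x - quad P (A *m x).
Proof.
rewrite /quad /slack_lmi tr_col_mx raddfN /= trmx_mul mul_row_block mul_row_col.
rewrite !(mulNmx, mulmxN, mulmxDl, mulmxBl, mulmxDr, mulmxBr) -!scalemxAr -!scalemxAl !mulmxA.
rewrite !mxE; lra.
Qed.


Lemma quad_sum p (I : Type) (r : seq I) (th : I -> R) (A : I -> 'M[R]_p) x :
  quad (\sum_(k <- r) th k *: A k) x = \sum_(k <- r) th k * quad (A k) x.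
Proof.
rewrite /quad mulmx_sumr mulmx_suml summxE; apply: eq_bigr => k _.
by rewrite -scalemxAr -scalemxAl mxE.
Qed.

Lemma slack_lmi_comb N p (th : 'I_N -> R) b (G : 'M[R]_p) (P A : 'I_N -> 'M[R]_p) :
  \sum_(k < N) th k = 1 ->
  \sum_(k < N) th k *: slack_lmi b G (P k) (A k)
  = slack_lmi b G (\sum_(k < N) th k *: P k) (\sum_(k < N) th k *: A k).
Proof.
move=> th_sum1; under eq_bigr do rewrite scale_block_mx.
rewrite sum_block_mx /slack_lmi; congr block_mx.
- by rewrite scaler_sumr; apply: eq_bigr => k _; rewrite !scalerA mulrC.
- by rewrite raddf_sum mulmx_suml; apply: eq_bigr => k _; rewrite /= linearZ scalemxAl.
- by rewrite mulmx_sumr; apply: eq_bigr => k _; rewrite scalemxAr.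
- by under eq_bigr do rewrite scalerBr; rewrite sumrB -scaler_suml th_sum1 scale1r.
Qed.

Lemma slack_lmi_decrease p b (G P A : 'M[R]_p) :
  (forall z, 0 <= quad (slack_lmi b G P A) z) ->
  forall x, quad P (A *m x) <= b * quad P x.
Proof.
by move=> lmi_ge0 x; rewrite -subr_ge0 -(quad_slack_lmi b G).
Qed.

End SlackLMI.

Lemma fin_pos_lbound (R : realDomainType) (I : finType) (f : I -> R) :
  (forall i, 0 < f i) -> exists2 c, 0 < c & forall i, c <= f i.
Proof.
move=> f_gt0; exists (\big[Num.min/1]_i f i) => [|i]; last exact: bigmin_le.
exact: lt_bigmin.
Qed.

Lemma fin_pos_ubound (R : realDomainType) (I : finType) (f : I -> R) :
  exists2 C, 0 < C & forall i, f i <= C.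
Proof.
exists (\big[Num.max/1]_i f i) => [|i]; last exact: le_bigmax.
exact: lt_le_trans ltr01 (bigmax_ge_id _ _ _ _).
Qed.

Section Stability.
Variable R : realType.

Lemma vnorm_ge0 p (x : 'cV[R]_p) : 0 <= vnorm x.
Proof. exact: sqrtr_ge0. Qed.

Lemma vnorm_sqr p (x : 'cV[R]_p) : vnorm x ^+ 2 = sqnorm (fun i => x i ord0).
Proof. by rewrite sqr_sqrtr // sqnorm_ge0. Qed.

Lemma quad_le_vnorm p (A : 'M[R]_p) x :
  quad A x <= (\sum_(j < p) \sum_(i < p) `|A i j|) * vnorm x ^+ 2.
Proof. by rewrite quadE vnorm_sqr; apply: qform_le. Qed.

Lemma pd_coercive p (P : 'M[R]_p) :
  pd P -> exists2 c, 0 < c & forall x, c * vnorm x ^+ 2 <= quad P x.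
Proof.
move=> [P_sym P_pos].
have [|y [i y_i_neq0]|c c_gt0 Hc] := @qform_coercive _ _ (fun i j => P i j).
- by move=> i j; rewrite -{1}P_sym mxE.
- have : \col_k y k != 0 -> 0 < quad P (\col_k y k) := P_pos _.
  rewrite quadE (@eq_qform _ _ _ _ y) => [|k]; last by rewrite mxE.
  apply; apply: contraNneq y_i_neq0 => /matrixP/(_ i ord0).
  by rewrite !mxE => ->.
- by exists c => // x; rewrite vnorm_sqr quadE.
Qed.

Lemma pd_family_coercive N p (P : 'I_N -> 'M[R]_p) :
  (forall k, pd (P k)) ->
  exists2 c, 0 < c & forall k x, c * vnorm x ^+ 2 <= quad (P k) x.
Proof.
move=> P_pd.
have /fin_all_exists [cs Hcs] :
    forall k, exists c, 0 < c /\ forall x, c * vnorm x ^+ 2 <= quad (P k) x.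
  by move=> k; have [c ? ?] := pd_coercive (P_pd k); exists c.
have [c c_gt0 c_le] := fin_pos_lbound (fun k => (Hcs k).1).
exists c => // k x; apply: le_trans _ ((Hcs k).2 x).
by apply: (@ler_wpM2r R); [exact: sqr_ge0 | exact: c_le].
Qed.

Lemma quad_family_bounded N p (A : 'I_N -> 'M[R]_p) :
  exists2 C, 0 < C & forall k x, quad (A k) x <= C * vnorm x ^+ 2.
Proof.
have [C C_gt0 HC] := fin_pos_ubound (fun k => \sum_(j < p) \sum_(i < p) `|A k i j|).
exists C => // k x; apply: le_trans (quad_le_vnorm _ _) _.
by apply: (@ler_wpM2r R); [exact: sqr_ge0 | exact: HC].
Qed.

Lemma simplex_sum_ge N (th : 'cV[R]_N) (f : 'I_N -> R) a :
  simplex th -> (forall k, a <= f k) -> a <= \sum_(k < N) th k ord0 * f k.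
Proof.
move=> [th_ge0 th_sum1] a_le; rewrite -[a]mul1r -th_sum1 mulr_suml.
by apply: ler_sum => k _; apply: ler_wpM2l.
Qed.

Lemma simplex_sum_le N (th : 'cV[R]_N) (f : 'I_N -> R) a :
  simplex th -> (forall k, f k <= a) -> \sum_(k < N) th k ord0 * f k <= a.
Proof.
move=> [th_ge0 th_sum1] le_a; rewrite -[a]mul1r -th_sum1 mulr_suml.
by apply: ler_sum => k _; apply: ler_wpM2l.
Qed.

Lemma traj_exp_stable p (A : 'M[R]_p) (V : 'cV[R]_p -> R) (c C b : R) :
  0 < c -> 0 <= C -> 0 <= b ->
  (forall x, c * vnorm x ^+ 2 <= V x) -> (forall x, V x <= C * vnorm x ^+ 2) ->
  (forall x, V (A *m x) <= b ^+ 2 * V x) ->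
  forall x0 t, vnorm (traj A x0 t) <= Num.sqrt (C / c) * vnorm x0 * b ^+ t.
Proof.
move=> c_gt0 C_ge0 b_ge0 V_ge V_le V_dec x0 t.
have V_traj : V (traj A x0 t) <= (b ^+ t) ^+ 2 * V x0.
  elim: t => [|t IH]; first by rewrite expr0 expr1n mul1r.
  rewrite /traj iterS -/(traj A x0 t) [b ^+ t.+1]exprS exprMn -mulrA.
  apply: le_trans (V_dec _) _.
  by apply: ler_wpM2l; [exact: sqr_ge0 | exact: IH].
rewrite -(@ler_pXn2r _ 2) ?nnegrE ?mulr_ge0 ?exprn_ge0 ?sqrtr_ge0 ?vnorm_ge0 //.
rewrite !exprMn (sqr_sqrtr (divr_ge0 C_ge0 (ltW c_gt0))) -(ler_pM2l c_gt0).
apply: le_trans (V_ge _) _; apply: le_trans V_traj _.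
rewrite [X in _ <= X](_ : _ = (b ^+ t) ^+ 2 * (C * vnorm x0 ^+ 2)); last first.
  by field; rewrite gt_eqF.
by apply: ler_wpM2l; [exact: sqr_ge0 | exact: V_le].
Qed.

Lemma Cop_Fth n m N (Ee : 'M[R]_(ntil n, n * n)) (D : 'M[R]_(n * n, ntil n))
    (M : 'I_N -> 'M[R]_(n * (n + m))) th K :
  Cop Ee D (Fth M th K) = \sum_(k < N) th k ord0 *: Cop Ee D (Fk (M k) K).
Proof.
rewrite /Cop /Fth mulmx_sumr mulmx_suml; apply: eq_bigr => k _.
by rewrite -scalemxAr -scalemxAl.
Qed.

End Stability.

Unset Implicit Arguments.

Theorem theorem4 (R : realType) (n m N : nat) (Hn : (0 < n)%N) (Hm : (0 < m)%N)
  (HN : (0 < N)%N)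
  (Ee : 'M[R]_(ntil n, n * n)) (D : 'M[R]_(n * n, ntil n))
  (HEe : forall X : 'M[R]_n, Ee *m vec X = vech X)
  (HD : forall Y : 'M[R]_n, Y^T = Y -> D *m vech Y = vec Y)
  (M : 'I_N -> 'M[R]_(n * (n + m)))
  (HM : forall k, (M k)^T = M k)
  (Theta : Type) (Stheta : Theta -> Prop) (phi : Theta -> 'cV[R]_N)
  (Hphi : forall th, Stheta th -> simplex (phi th))
  (beta : R) (Hbeta0 : 0 < beta) (Hbeta1 : beta < 1)
  (K : 'M[R]_(m, n))
  (P : 'I_N -> 'M[R]_(ntil n)) (G : 'M[R]_(ntil n))
  (HP : forall k, pd (P k))
  (HLMI : forall k,
     psd (block_mx (beta ^+ 2 *: P k) ((Cop Ee D (Fk (M k) K))^T *m G)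
                   (G^T *m Cop Ee D (Fk (M k) K)) (G^T + G - P k))) :
  exists alpha : R, 0 < alpha /\
    forall thtil : 'cV[R]_N, (exists th, Stheta th /\ phi th = thtil) ->
    forall (x0 : 'cV[R]_(ntil n)) (t : nat),
      vnorm (traj (Cop Ee D (Fth M thtil K)) x0 t) <= alpha * vnorm x0 * beta ^+ t.
Proof.
have [c c_gt0 P_ge] := pd_family_coercive HP.
have [C C_gt0 P_le] := quad_family_bounded P.
exists (Num.sqrt (C / c)); split; first by rewrite sqrtr_gt0 divr_gt0.
move=> _ [th [/Hphi th_simplex <-]] x0 t.
have [_ th_sum1] := th_simplex.
pose Pt := \sum_(k < N) phi th k ord0 *: P k.
apply: (@traj_exp_stable _ _ _ (quad Pt)); rewrite ?ltW //.
- by move=> x; rewrite quad_sum; apply: simplex_sum_ge.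
- by move=> x; rewrite quad_sum; apply: simplex_sum_le.
- rewrite Cop_Fth; apply: slack_lmi_decrease => z.
  rewrite -slack_lmi_comb // quad_sum.
  by apply: sumr_ge0 => k _; apply: mulr_ge0; [exact: th_simplex.1 | exact: (HLMI k).2].
Qed.
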